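(* There exists a topological dynamical system $(X,T)$ which is not thickly sensitive and satisfies $\mathrm{Eq}_{\mathrm{syn}}(X,T)=\varnothing$.
   Context: $(X,\varrho)$ compact metric, $T$ continuous surjection. $S_T(U,\delta)=\{n\in\mathbb{N}:\exists x_1,x_2\in U,\ \varrho(T^nx_1,T^nx_2)>\delta\}$, $J_T(U,\delta)=\mathbb N\setminus S_T(U,\delta)$. Thick: contains arbitrarily long blocks of consecutive integers; syndetic: bounded gaps. Thickly sensitive: there is $\delta>0$ with $S_T(U,\delta)$ thick for all opene $U$. $\mathrm{Eq}_{\mathrm{syn}}(X,T)$: points $x$ such that for every $\varepsilon>0$ some neighborhood $U$ of $x$ has $J_T(U,\varepsilon)$ syndetic. *)

From Stdlib Require Import Reals.
Open Scope R_scope.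

Definition is_metric {X : Type} (d : X -> X -> R) : Prop :=
  (forall x y, 0 <= d x y) /\
  (forall x y, d x y = 0 <-> x = y) /\
  (forall x y, d x y = d y x) /\
  (forall x y z, d x z <= d x y + d y z).

(* Compactness of a metric space (sequential compactness, equivalent for metric spaces). *)
Definition seq_compact {X : Type} (d : X -> X -> R) : Prop :=
  forall u : nat -> X, exists (phi : nat -> nat) (l : X),
    (forall n m, (n < m)%nat -> (phi n < phi m)%nat) /\
    (forall eps, 0 < eps -> exists N, forall n, (N <= n)%nat -> d (u (phi n)) l < eps).

Definition compact_metric_space {X : Type} (d : X -> X -> R) : Prop :=
  is_metric d /\ seq_compact d.

Definition continuous_map {X : Type} (d : X -> X -> R) (T : X -> X) : Prop :=
  forall x eps, 0 < eps -> exists del, 0 < del /\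
    forall y, d x y < del -> d (T x) (T y) < eps.

Definition surjective_map {X : Type} (T : X -> X) : Prop :=
  forall y, exists x, T x = y.

Definition TDS {X : Type} (d : X -> X -> R) (T : X -> X) : Prop :=
  compact_metric_space d /\ continuous_map d T /\ surjective_map T.

Definition is_open {X : Type} (d : X -> X -> R) (U : X -> Prop) : Prop :=
  forall x, U x -> exists r, 0 < r /\ forall y, d x y < r -> U y.

Definition opene {X : Type} (d : X -> X -> R) (U : X -> Prop) : Prop :=
  is_open d U /\ exists x, U x.

Definition nbhd {X : Type} (d : X -> X -> R) (x : X) (U : X -> Prop) : Prop :=
  exists r, 0 < r /\ forall y, d x y < r -> U y.

Fixpoint iter {X : Type} (T : X -> X) (n : nat) (x : X) : X :=
  match n with
  | O => x
  | S k => T (iter T k x)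
  end.

Definition S_T {X : Type} (d : X -> X -> R) (T : X -> X) (U : X -> Prop) (del : R)
  (n : nat) : Prop :=
  exists x1 x2, U x1 /\ U x2 /\ d (iter T n x1) (iter T n x2) > del.

Definition J_T {X : Type} (d : X -> X -> R) (T : X -> X) (U : X -> Prop) (del : R)
  (n : nat) : Prop := ~ S_T d T U del n.

Definition thick (A : nat -> Prop) : Prop :=
  forall L : nat, exists a : nat, forall i, (i < L)%nat -> A (a + i)%nat.

Definition syndetic (A : nat -> Prop) : Prop :=
  exists L : nat, (0 < L)%nat /\ forall a : nat, exists i, (i < L)%nat /\ A (a + i)%nat.

Definition thickly_sensitive {X : Type} (d : X -> X -> R) (T : X -> X) : Prop :=
  exists del, 0 < del /\ forall U, opene d U -> thick (S_T d T U del).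

Definition Eq_syn {X : Type} (d : X -> X -> R) (T : X -> X) (x : X) : Prop :=
  forall eps, 0 < eps -> exists U, nbhd d x U /\ syndetic (J_T d T U eps).

From Pilot Require Import Defs.
From Stdlib Require Import Reals.
Open Scope R_scope.
From Stdlib Require Import Lra Lia ZArith.
From Stdlib Require Import Classical ClassicalEpsilon FunctionalExtensionality ProofIrrelevance.

(* The example is the shift on the space of 0-1 sequences whose support, in every initial
   segment, lies in an arithmetic progression of difference at least 2; it is a closed,
   shift-invariant subset of the Cantor space.

   It is not thickly sensitive: for p = L! + 1 the open set U = {x : x_0 = x_p = 1} forces the
   difference to divide p, hence to exceed L, so every point of U vanishes on the windows
   [qp + 1, qp + 1 + L). At the syndetic set of times qp + 1 the image of U has diameter at
   most 2^-L.

   No point is syndetically equicontinuous: if x has two ones, every difference divides their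
   distance G (otherwise take G = 2). Arbitrarily close to x lie both the truncation of x after
   position m and x followed by the full progression of difference G; at every time n >= m
   these two points are more than 2^-G apart, so J_T(U, 2^-G) is bounded. *)

Lemma half_pow_pos n : 0 < (/2)^n.
Proof. apply pow_lt; lra. Qed.

Lemma half_pow_le n m : (n <= m)%nat -> (/2)^m <= (/2)^n.
Proof.
  induction 1; [lra|]. simpl. pose proof (half_pow_pos m). lra.
Qed.

Lemma half_pow_lt n m : (n < m)%nat -> (/2)^m < (/2)^n.
Proof.
  intro H. apply Rle_lt_trans with ((/2)^(S n)); [apply half_pow_le; lia|].
  simpl. pose proof (half_pow_pos n). lra.
Qed.

Lemma half_pow_below eps : 0 < eps -> exists m, (/2)^m < eps.
Proof.
  intro He. destruct (pow_lt_1_zero (/2)) with eps as [m Hm]; auto.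
  { rewrite Rabs_right; lra. }
  exists m. specialize (Hm m (le_n m)).
  rewrite Rabs_right in Hm; [exact Hm|apply Rle_ge, Rlt_le, half_pow_pos].
Qed.

Definition agree_upto (m : nat) (w v : nat -> bool) : Prop :=
  forall i, (i < m)%nat -> w i = v i.

Definition first_diff (w v : nat -> bool) (n : nat) : Prop :=
  w n <> v n /\ agree_upto n w v.

Lemma first_diff_exists w v : w <> v -> exists n, first_diff w v n.
Proof.
  intro Hwv.
  assert (Hdiff : exists i, w i <> v i).
  { apply not_all_not_ex. intro Hall. apply Hwv, functional_extensionality.
    intro i. apply NNPP, Hall. }
  destruct (dec_inh_nat_subset_has_unique_least_element _ (fun i => classic _) Hdiff)
    as [n [[Hn Hmin] _]].
  exists n. split; [exact Hn|]. intros i Hi.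
  apply NNPP. intro Hi'. specialize (Hmin i Hi'). lia.
Qed.

Lemma first_diff_unique w v n m : first_diff w v n -> first_diff w v m -> n = m.
Proof.
  intros [Hn Hagn] [Hm Hagm]. destruct (Nat.lt_trichotomy n m) as [H|[H|H]]; auto.
  - exfalso; apply Hn; auto.
  - exfalso; apply Hm; auto.
Qed.

Definition cantor_dist (w v : nat -> bool) : R :=
  if excluded_middle_informative (w = v) then 0
  else (/2)^(epsilon (inhabits 0%nat) (first_diff w v)).

Lemma cantor_dist_spec w v :
  (w = v /\ cantor_dist w v = 0) \/
  (exists n, first_diff w v n /\ cantor_dist w v = (/2)^n).
Proof.
  unfold cantor_dist. destruct (excluded_middle_informative (w = v)) as [E|E].
  - left; auto.
  - right. eexists; split; [|reflexivity]. apply epsilon_spec, first_diff_exists, E.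
Qed.

Lemma cantor_dist_le w v m : agree_upto m w v -> cantor_dist w v <= (/2)^m.
Proof.
  intro Hag. destruct (cantor_dist_spec w v) as [[_ ->]|[n [[Hn _] ->]]].
  - apply Rlt_le, half_pow_pos.
  - apply half_pow_le. destruct (le_lt_dec m n); auto. exfalso; apply Hn; auto.
Qed.

Lemma cantor_dist_ge w v i : w i <> v i -> (/2)^i <= cantor_dist w v.
Proof.
  intro Hi. destruct (cantor_dist_spec w v) as [[-> _]|[n [[_ Hag] ->]]].
  - tauto.
  - apply half_pow_le. destruct (le_lt_dec n i); auto. exfalso; apply Hi; auto.
Qed.

Lemma agree_of_cantor_dist_lt w v m : cantor_dist w v < (/2)^m -> agree_upto m w v.
Proof.
  intros H i Hi. destruct (Bool.bool_dec (w i) (v i)) as [e|e]; auto.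
  pose proof (cantor_dist_ge _ _ _ e). pose proof (half_pow_le i m ltac:(lia)). lra.
Qed.

Lemma cantor_dist_ge0 w v : 0 <= cantor_dist w v.
Proof.
  destruct (cantor_dist_spec w v) as [[_ ->]|[n [_ ->]]]; [lra|apply Rlt_le, half_pow_pos].
Qed.

Lemma cantor_dist_sym w v : cantor_dist w v = cantor_dist v w.
Proof.
  destruct (cantor_dist_spec w v) as [[-> _]|[n [[Hn Hag] ->]]]; [reflexivity|].
  destruct (cantor_dist_spec v w) as [[-> _]|[m [[Hm Hagm] ->]]]; [tauto|].
  f_equal. apply (first_diff_unique w v); split; auto.
  intros i Hi; symmetry; auto.
Qed.

Lemma cantor_dist_triangle w v u : cantor_dist w u <= cantor_dist w v + cantor_dist v u.
Proof.
  pose proof (cantor_dist_ge0 w v). pose proof (cantor_dist_ge0 v u).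
  destruct (cantor_dist_spec w u) as [[_ ->]|[n [[Hn _] ->]]]; [lra|].
  destruct (Bool.bool_dec (w n) (v n)) as [e|e].
  - assert (Hvu : v n <> u n) by congruence. pose proof (cantor_dist_ge v u n Hvu). lra.
  - pose proof (cantor_dist_ge w v n e). lra.
Qed.

Lemma cantor_dist_metric : is_metric cantor_dist.
Proof.
  split; [exact cantor_dist_ge0|].
  split; [|split; [exact cantor_dist_sym|exact cantor_dist_triangle]].
  intros w v. destruct (cantor_dist_spec w v) as [[E ->]|[n [[Hn _] ->]]]; [tauto|].
  pose proof (half_pow_pos n). split; intro E; [lra|subst; tauto].
Qed.

Definition infinite (A : nat -> Prop) : Prop :=
  forall N, exists n, (N <= n)%nat /\ A n.

Lemma infinite_split_bool (b : nat -> bool) A :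
  infinite A -> exists c, infinite (fun n => A n /\ b n = c).
Proof.
  intro HA. apply NNPP. intro Hnone.
  assert (Hfin : forall c, exists N, forall n, (N <= n)%nat -> ~ (A n /\ b n = c)).
  { intro c. apply NNPP. intro Hc. apply Hnone. exists c. intro N.
    apply NNPP. intro HN. apply Hc. exists N. intros n Hn Hnc. apply HN. eauto. }
  destruct (Hfin true) as [N1 H1]. destruct (Hfin false) as [N2 H2].
  destruct (HA (N1 + N2)%nat) as [n [Hn HAn]].
  destruct (b n) eqn:E; [apply (H1 n)|apply (H2 n)]; auto; lia.
Qed.

Definition pick_after (A : nat -> Prop) (N : nat) : nat :=
  epsilon (inhabits 0%nat) (fun n => (N <= n)%nat /\ A n).

Lemma pick_after_spec A N : infinite A -> (N <= pick_after A N)%nat /\ A (pick_after A N).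
Proof. intro HA. unfold pick_after. apply epsilon_spec, HA. Qed.

Section Diagonal.

Variable u : nat -> nat -> bool.

Definition frequent_bit (A : nat -> Prop) (k : nat) : bool :=
  epsilon (inhabits true) (fun c => infinite (fun n => A n /\ u n k = c)).

Fixpoint stage (k : nat) : nat -> Prop :=
  match k with
  | O => fun _ => True
  | S k => fun n => stage k n /\ u n k = frequent_bit (stage k) k
  end.

Lemma stage_infinite k : infinite (stage k).
Proof.
  induction k as [|k IH].
  - intro N. exists N. split; [lia|exact I].
  - apply (epsilon_spec (inhabits true) (fun c => infinite (fun n => stage k n /\ u n k = c))).
    apply infinite_split_bool, IH.
Qed.

Definition diagonal_limit (k : nat) : bool := frequent_bit (stage k) k.

Lemma stage_agree k n : stage k n -> agree_upto k (u n) diagonal_limit.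
Proof.
  revert n; induction k as [|k IH]; intros n Hn i Hi; [lia|].
  destruct Hn as [Hn Hnk].
  destruct (Nat.eq_dec i k) as [->|Hik]; [exact Hnk|].
  apply IH; auto; lia.
Qed.

Fixpoint diagonal_index (k : nat) : nat :=
  match k with
  | O => O
  | S k => pick_after (stage (S k)) (S (diagonal_index k))
  end.

Lemma diagonal_index_stage k : stage k (diagonal_index k).
Proof. destruct k; [exact I|apply (pick_after_spec (stage (S k))), stage_infinite]. Qed.

Lemma diagonal_index_increasing n m : (n < m)%nat -> (diagonal_index n < diagonal_index m)%nat.
Proof.
  assert (Hstep : forall k, (diagonal_index k < diagonal_index (S k))%nat).
  { intro k. apply (pick_after_spec (stage (S k))), stage_infinite. }
  induction 1; [apply Hstep|]. pose proof (Hstep m). lia.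
Qed.

End Diagonal.

Lemma cantor_subseq_agree (u : nat -> nat -> bool) : exists (phi : nat -> nat) (l : nat -> bool),
  (forall n m, (n < m)%nat -> (phi n < phi m)%nat) /\ (forall n, agree_upto n (u (phi n)) l).
Proof.
  exists (diagonal_index u), (diagonal_limit u). split; [apply diagonal_index_increasing|].
  intro n. apply stage_agree, diagonal_index_stage.
Qed.

Lemma syndetic_not_thick (A B : nat -> Prop) :
  syndetic B -> (forall n, B n -> ~ A n) -> ~ thick A.
Proof.
  intros [L [_ HB]] HAB HA. destruct (HA L) as [a Ha]. destruct (HB a) as [i [Hi HBi]].
  exact (HAB _ HBi (Ha i Hi)).
Qed.

Lemma bounded_not_syndetic (A : nat -> Prop) m :
  (forall n, A n -> (n < m)%nat) -> ~ syndetic A.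
Proof.
  intros Hm [L [_ HA]]. destruct (HA m) as [i [_ HAi]]. specialize (Hm _ HAi). lia.
Qed.

Lemma syndetic_progression p r : (0 < p)%nat -> syndetic (fun n => exists q, n = (q * p + r)%nat).
Proof.
  intro Hp. exists (S (p + r)). split; [lia|]. intro a.
  pose proof (Nat.div_mod a p ltac:(lia)). pose proof (Nat.mod_upper_bound a p ltac:(lia)).
  exists (p + r - a mod p)%nat. split; [lia|]. exists (S (a / p)). nia.
Qed.

Lemma Zdivide_sub_of_residues g a i j :
  (g | i - a)%Z -> (g | j - a)%Z -> (g | j - i)%Z.
Proof.
  intros Hi Hj. replace (j - i)%Z with ((j - a) - (i - a))%Z by lia.
  apply Z.divide_sub_r; assumption.
Qed.

Lemma Zdivide_fact d n : (1 <= d <= n)%nat -> (Z.of_nat d | Z.of_nat (fact n))%Z.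
Proof.
  induction n as [|n IH]; intro Hd; [lia|].
  change (fact (S n)) with (S n * fact n)%nat. rewrite Nat2Z.inj_mul.
  destruct (Nat.eq_dec d (S n)) as [->|Hne]; [apply Z.divide_factor_l|].
  apply Z.divide_mul_r, IH. lia.
Qed.

Lemma fact_succ_no_small_divisor g n :
  (2 <= g <= n)%nat -> ~ (Z.of_nat g | Z.of_nat (S (fact n)))%Z.
Proof.
  intros Hg Hdiv.
  assert (H1 : (Z.of_nat g | 1)%Z).
  { replace 1%Z with (Z.of_nat (S (fact n)) - Z.of_nat (fact n))%Z by lia.
    apply Z.divide_sub_r; [exact Hdiv|apply Zdivide_fact; lia]. }
  apply Z.divide_1_r in H1. lia.
Qed.

Definition locally_in_progression (w : nat -> bool) : Prop :=
  forall N, exists (g : nat) (a : Z), (2 <= g)%nat /\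
    forall i, (i < N)%nat -> w i = true -> (Z.of_nat g | Z.of_nat i - a)%Z.

Lemma locally_in_progression_shift w :
  locally_in_progression w -> locally_in_progression (fun i => w (S i)).
Proof.
  intros Hw N. destruct (Hw (S N)) as [g [a [Hg Ha]]]. exists g, (a - 1)%Z. split; auto.
  intros i Hi Hwi. specialize (Ha (S i) ltac:(lia) Hwi).
  replace (Z.of_nat i - (a - 1))%Z with (Z.of_nat (S i) - a)%Z by lia. exact Ha.
Qed.

Lemma locally_in_progression_cons_false w : locally_in_progression w ->
  locally_in_progression (fun i => match i with O => false | S j => w j end).
Proof.
  intros Hw N. destruct (Hw N) as [g [a [Hg Ha]]]. exists g, (a + 1)%Z. split; auto.
  intros [|i] Hi Hwi; [discriminate|]. specialize (Ha i ltac:(lia) Hwi).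
  replace (Z.of_nat (S i) - (a + 1))%Z with (Z.of_nat i - a)%Z by lia. exact Ha.
Qed.

Lemma locally_in_progression_sub v w : (forall i, v i = true -> w i = true) ->
  locally_in_progression w -> locally_in_progression v.
Proof.
  intros Hvw Hw N. destruct (Hw N) as [g [a [Hg Ha]]]. exists g, a. split; auto.
Qed.

Lemma locally_in_progression_of_prefixes w :
  (forall N, exists v, locally_in_progression v /\ agree_upto N v w) ->
  locally_in_progression w.
Proof.
  intros Hpre N. destruct (Hpre N) as [v [Hv Hag]]. destruct (Hv N) as [g [a [Hg Ha]]].
  exists g, a. split; auto. intros i Hi Hwi. apply Ha; auto. rewrite Hag; auto.
Qed.

Definition progression (a : Z) (G : nat) (i : nat) : bool :=
  ((Z.of_nat i - a) mod Z.of_nat G =? 0)%Z.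

Lemma progression_spec a G i : (0 < G)%nat ->
  progression a G i = true <-> (Z.of_nat G | Z.of_nat i - a)%Z.
Proof.
  intro HG. unfold progression. rewrite Z.eqb_eq. split; [apply Z.mod_divide; lia|].
  intro H. apply Z.mod_divide; [lia|exact H].
Qed.

Lemma locally_in_progression_progression a G :
  (2 <= G)%nat -> locally_in_progression (progression a G).
Proof.
  intros HG N. exists G, a. split; auto. intros i _. apply progression_spec. lia.
Qed.

Lemma progression_hits a G n : (0 < G)%nat ->
  exists t, (t < G)%nat /\ progression a G (t + n) = true.
Proof.
  intro HG. set (r := ((a - Z.of_nat n) mod Z.of_nat G)%Z).
  assert (Hr : (0 <= r < Z.of_nat G)%Z) by (apply Z.mod_pos_bound; lia).
  exists (Z.to_nat r). split; [lia|]. apply progression_spec; auto.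
  exists (- ((a - Z.of_nat n) / Z.of_nat G))%Z.
  pose proof (Z.div_mod (a - Z.of_nat n) (Z.of_nat G) ltac:(lia)) as Hdiv.
  fold r in Hdiv. lia.
Qed.

Definition splice (m : nat) (w v : nat -> bool) (i : nat) : bool :=
  if (i <? m)%nat then w i else v i.

Lemma splice_agree m w v : agree_upto m (splice m w v) w.
Proof. intros i Hi. unfold splice. apply Nat.ltb_lt in Hi. rewrite Hi. reflexivity. Qed.

Lemma splice_beyond m w v i : (m <= i)%nat -> splice m w v i = v i.
Proof. intro Hi. unfold splice. apply Nat.ltb_ge in Hi. rewrite Hi. reflexivity. Qed.

Definition in_progressions_dividing (w : nat -> bool) (a : Z) (G : nat) : Prop :=
  forall N, exists g : nat, (2 <= g)%nat /\ (Z.of_nat g | Z.of_nat G)%Z /\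
    forall i, (i < N)%nat -> w i = true -> (Z.of_nat g | Z.of_nat i - a)%Z.

Lemma locally_in_progression_bounded_modulus w : locally_in_progression w ->
  exists (a : Z) (G : nat), (0 < G)%nat /\ in_progressions_dividing w a G.
Proof.
  intro Hw.
  destruct (classic (exists i0 j0, (i0 < j0)%nat /\ w i0 = true /\ w j0 = true))
    as [[i0 [j0 [Hij [Hi0 Hj0]]]]|Hno].
  - exists (Z.of_nat i0), (j0 - i0)%nat. split; [lia|]. intro N.
    destruct (Hw (N + S j0)%nat) as [g [a [Hg Ha]]].
    pose proof (Ha i0 ltac:(lia) Hi0) as Hgi0. pose proof (Ha j0 ltac:(lia) Hj0) as Hgj0.
    exists g. split; [exact Hg|split].
    + rewrite Nat2Z.inj_sub by lia. exact (Zdivide_sub_of_residues _ _ _ _ Hgi0 Hgj0).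
    + intros i Hi Hwi. exact (Zdivide_sub_of_residues _ _ _ _ Hgi0 (Ha i ltac:(lia) Hwi)).
  - assert (Hone : exists a, forall i, w i = true -> i = a).
    { destruct (classic (exists i0, w i0 = true)) as [[i0 Hi0]|Hnone].
      - exists i0. intros i Hi.
        destruct (Nat.lt_trichotomy i i0) as [Hlt|[Heq|Hgt]]; [|exact Heq|];
          exfalso; apply Hno; eauto.
      - exists 0%nat. intros i Hi. exfalso; eauto. }
    destruct Hone as [a Ha]. exists (Z.of_nat a), 2%nat. split; [lia|]. intro N.
    exists 2%nat. split; [lia|split; [apply Z.divide_refl|]].
    intros i _ Hwi. rewrite (Ha i Hwi), Z.sub_diag. apply Z.divide_0_r.
Qed.

Lemma locally_in_progression_splice w a G m : (0 < G)%nat ->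
  in_progressions_dividing w a G -> locally_in_progression (splice m w (progression a G)).
Proof.
  intros HG Hw N. destruct (Hw N) as [g [Hg [HgG Ha]]]. exists g, a. split; [exact Hg|].
  intros i Hi. unfold splice. destruct (i <? m)%nat; [apply Ha, Hi|].
  intro Hprog. apply progression_spec in Hprog; [|exact HG].
  exact (Z.divide_trans _ _ _ HgG Hprog).
Qed.

Lemma locally_in_progression_gap w L : locally_in_progression w ->
  w 0%nat = true -> w (S (fact L)) = true ->
  forall q i, (i < L)%nat -> w (q * S (fact L) + 1 + i)%nat = false.
Proof.
  intros Hw H0 Hp q i Hi. set (p := S (fact L)) in *. set (n := (q * p + 1 + i)%nat).
  destruct (w n) eqn:Hn; [exfalso|reflexivity].
  destruct (Hw (S (n + p))) as [g [a [Hg Ha]]].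
  pose proof (Ha 0%nat ltac:(lia) H0) as Hg0.
  pose proof (Zdivide_sub_of_residues _ _ _ _ Hg0 (Ha p ltac:(lia) Hp)) as Hgp.
  pose proof (Zdivide_sub_of_residues _ _ _ _ Hg0 (Ha n ltac:(lia) Hn)) as Hgn.
  assert (Hgi : (Z.of_nat g | Z.of_nat (S i))%Z).
  { replace (Z.of_nat (S i))
      with ((Z.of_nat n - Z.of_nat 0) - Z.of_nat q * (Z.of_nat p - Z.of_nat 0))%Z
      by (unfold n; lia).
    apply Z.divide_sub_r; [exact Hgn|apply Z.divide_mul_r, Hgp]. }
  apply Z.divide_pos_le in Hgi; [|lia].
  apply (fact_succ_no_small_divisor g L); [lia|].
  replace (Z.of_nat (S (fact L))) with (Z.of_nat p - Z.of_nat 0)%Z by (unfold p; lia). exact Hgp.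
Qed.

Definition X : Type := {w : nat -> bool | locally_in_progression w}.

Definition dX (x y : X) : R := cantor_dist (proj1_sig x) (proj1_sig y).

Definition TX (x : X) : X :=
  exist _ (fun i => proj1_sig x (S i)) (locally_in_progression_shift _ (proj2_sig x)).

Lemma dX_metric : is_metric dX.
Proof.
  destruct cantor_dist_metric as [Hge0 [Hzero [Hsym Htri]]].
  split; [|split; [|split]]; intros; unfold dX; auto.
  rewrite Hzero. split; [|intros ->; reflexivity].
  destruct x, y; simpl. intros ->. apply subset_eq_compat. reflexivity.
Qed.

Lemma X_compact : compact_metric_space dX.
Proof.
  split; [exact dX_metric|].
  intro u. destruct (cantor_subseq_agree (fun n => proj1_sig (u n))) as [phi [l [Hphi Hl]]].
  assert (HlX : locally_in_progression l).
  { apply locally_in_progression_of_prefixes. intro N.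
    exists (proj1_sig (u (phi N))). split; [apply proj2_sig|apply Hl]. }
  exists phi, (exist _ l HlX). split; [exact Hphi|].
  intros eps Heps. destruct (half_pow_below eps Heps) as [M HM]. exists M. intros n Hn.
  apply Rle_lt_trans with ((/2)^M); [|exact HM]. apply cantor_dist_le.
  intros i Hi. apply Hl. lia.
Qed.

Lemma TX_continuous : continuous_map dX TX.
Proof.
  intros x eps Heps. destruct (half_pow_below eps Heps) as [M HM].
  exists ((/2)^(S M)). split; [apply half_pow_pos|]. intros y Hxy.
  apply Rle_lt_trans with ((/2)^M); [|exact HM]. apply cantor_dist_le.
  intros i Hi. apply (agree_of_cantor_dist_lt _ _ _ Hxy). lia.
Qed.

Lemma TX_surjective : surjective_map TX.
Proof.
  intros [w Hw]. exists (exist _ _ (locally_in_progression_cons_false _ Hw)).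
  apply subset_eq_compat. reflexivity.
Qed.

Lemma iter_TX k x : proj1_sig (Defs.iter TX k x) = fun i => proj1_sig x (i + k)%nat.
Proof.
  induction k as [|k IH]; simpl; apply functional_extensionality; intro i.
  - rewrite Nat.add_0_r. reflexivity.
  - rewrite IH. f_equal. lia.
Qed.

Lemma dX_iter k x y :
  dX (Defs.iter TX k x) (Defs.iter TX k y) =
  cantor_dist (fun i => proj1_sig x (i + k)%nat) (fun i => proj1_sig y (i + k)%nat).
Proof. unfold dX. rewrite !iter_TX. reflexivity. Qed.

Lemma cylinder_open (U : X -> Prop) m :
  (forall x y, agree_upto m (proj1_sig x) (proj1_sig y) -> U x -> U y) -> is_open dX U.
Proof.
  intros HU x Hx. exists ((/2)^m). split; [apply half_pow_pos|]. intros y Hxy.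
  apply (HU x); [apply agree_of_cantor_dist_lt, Hxy|exact Hx].
Qed.

Lemma TX_not_thickly_sensitive : ~ thickly_sensitive dX TX.
Proof.
  intros [del [Hdel Hts]]. destruct (half_pow_below del Hdel) as [L HL].
  set (p := S (fact L)). assert (Hp : (2 <= p)%nat) by (pose proof (lt_O_fact L); unfold p; lia).
  set (U := fun x : X => proj1_sig x 0%nat = true /\ proj1_sig x p = true).
  assert (HU : opene dX U).
  { split.
    - apply (cylinder_open U (S p)). intros x y Hxy [H0 Hpx].
      split; rewrite <- Hxy; auto; lia.
    - exists (exist _ _ (locally_in_progression_progression 0 p Hp)).
      split; apply progression_spec; try lia; [exists 0%Z | exists 1%Z]; lia. }
  refine (syndetic_not_thick _ _ (syndetic_progression p 1 ltac:(lia)) _ (Hts U HU)).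
  intros n [q ->] [x1 [x2 [[Hx10 Hx1p] [[Hx20 Hx2p] Hd]]]].
  rewrite dX_iter in Hd.
  assert (Hgap : forall x, U x ->
            forall i, (i < L)%nat -> proj1_sig x (i + (q * p + 1))%nat = false).
  { intros [w Hw] [H0 Hpw] i Hi. simpl in *.
    replace (i + (q * p + 1))%nat with (q * S (fact L) + 1 + i)%nat by (unfold p; lia).
    apply (locally_in_progression_gap w L Hw H0 Hpw q i Hi). }
  assert (Hclose : cantor_dist (fun i => proj1_sig x1 (i + (q * p + 1))%nat)
                     (fun i => proj1_sig x2 (i + (q * p + 1))%nat) <= (/2)^L).
  { apply cantor_dist_le. intros i Hi. rewrite !Hgap; unfold U; auto. }
  lra.
Qed.

Lemma TX_not_Eq_syn x : ~ Eq_syn dX TX x.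
Proof.
  intro Hx. destruct x as [w Hw].
  destruct (locally_in_progression_bounded_modulus w Hw) as [a [G [HG HwG]]].
  destruct (Hx ((/2)^G) (half_pow_pos G)) as [U [[r [Hr HU]] Hsyn]].
  destruct (half_pow_below r Hr) as [m Hm].
  assert (Hnear : forall v (Hv : locally_in_progression v), agree_upto m v w -> U (exist _ v Hv)).
  { intros v Hv Hvw. apply HU. unfold dX; simpl. rewrite cantor_dist_sym.
    apply Rle_lt_trans with ((/2)^m); [apply cantor_dist_le, Hvw|exact Hm]. }
  assert (Hx1 : locally_in_progression (splice m w (fun _ => false))).
  { apply (locally_in_progression_sub _ w); [|exact Hw].
    intro i. unfold splice. destruct (i <? m)%nat; easy. }
  pose proof (locally_in_progression_splice w a G m HG HwG) as Hx2.
  refine (bounded_not_syndetic _ m _ Hsyn). intros n HJ. apply NNPP. intro Hn. apply HJ.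
  exists (exist _ _ Hx1), (exist _ _ Hx2).
  split; [apply Hnear, splice_agree|split; [apply Hnear, splice_agree|]].
  rewrite dX_iter. simpl. destruct (progression_hits a G n HG) as [t [Ht Hhit]].
  apply Rlt_gt, Rlt_le_trans with ((/2)^t); [apply half_pow_lt, Ht|].
  apply cantor_dist_ge. rewrite !splice_beyond, Hhit by lia. discriminate.
Qed.

Theorem mainTheorem5 :
  exists (X : Type) (d : X -> X -> R) (T : X -> X),
    inhabited X /\ TDS d T /\
    ~ thickly_sensitive d T /\
    (forall x : X, ~ Eq_syn d T x).
Proof.
  exists X, dX, TX. split; [|split; [|split]].
  - constructor. exists (fun _ => false). intro N. exists 2%nat, 0%Z. split; [lia|discriminate].
  - split; [exact X_compact|split; [exact TX_continuous|exact TX_surjective]].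
  - exact TX_not_thickly_sensitive.
  - exact TX_not_Eq_syn.
Qed.
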